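(* Index $\mathbb{R}^{2^L}$ by leaves $j \in \{0,\dots,2^L-1\}$ of a complete binary tree of depth $L$ in which each node at depth $k$ corresponds to a dyadic block $\{a,\dots,a+2^{L-k}-1\}$ of consecutive indices whose two children are its two halves, and let $W_L$ act by the induced permutation representation. The matched unitary of this representation is the Haar wavelet basis matrix, with columns ordered by scale: the scaling function $\phi(j) = 2^{-L/2}$, then for $s = 1,\dots,L$ the mother wavelets $\psi_{s,0},\dots,\psi_{s,2^{s-1}-1}$, where for $p \in \{0,\dots,2^{s-1}-1\}$, $a = p\,2^{L-s+1}$, $h = 2^{L-s}$, $\psi_{s,p}(j) = 2^{(s-L-1)/2}$ if $a \le j < a+h$, $-2^{(s-L-1)/2}$ if $a+h \le j < a+2h$, and $0$ otherwise. For every $W_L$-invariant covariance $\mathbf{R}$ on $\mathbb{R}^{2^L}$ the Haar wavelet transform diagonalizes $\mathbf{R}$, and the eigenvalue on the scale-$s$ subspace $\mathrm{span}\{\psi_{s,p}\}_p$ is $2^{s-1}$-fold degenerate.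
   Context: $W_L = \mathbb{Z}_2 \wr \cdots \wr \mathbb{Z}_2$ ($L$ levels), defined by $W_1 = \mathbb{Z}_2$, $W_d = W_{d-1}^2 \rtimes \mathbb{Z}_2$, acts on the leaves by tree-automorphisms: at each internal node a $\mathbb{Z}_2$ factor swaps the two child subtrees, independently across non-overlapping subtrees. A covariance (real symmetric positive semidefinite matrix) $\mathbf{R}$ is $W_L$-invariant if $\mathbf{P}_g \mathbf{R} \mathbf{P}_g^{-1} = \mathbf{R}$ for every permutation matrix $\mathbf{P}_g$, $g \in W_L$. The matched unitary is an orthogonal basis diagonalizing every such invariant covariance. *)

From HB Require Import structures.
From mathcomp Require Import all_boot all_order all_algebra all_fingroup.
Set Implicit Arguments. Unset Strict Implicit. Unset Printing Implicit Defensive.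
Import Order.TTheory GRing.Theory Num.Theory.
Local Open Scope ring_scope.

(* Leaves of the complete binary tree of depth L are 'I_(2^L).  The node at
   depth k (0 <= k <= L) with block index b is the dyadic block
   {b*2^(L-k), ..., b*2^(L-k) + 2^(L-k) - 1}; leaf j lies in block j %/ 2^(L-k). *)

(* W_L acting on leaves: the tree automorphisms of the complete binary tree of
   depth L, i.e. the permutations of the leaves preserving, at every depth k,
   the relation "lie in the same depth-k dyadic block". *)
Definition W (L : nat) : {set {perm 'I_(2 ^ L)}} :=
  [set g : {perm 'I_(2 ^ L)} | [forall k : 'I_L.+1, forall i : 'I_(2 ^ L),
     forall j : 'I_(2 ^ L),
       (i %/ 2 ^ (L - k) == j %/ 2 ^ (L - k))%N ==
       (g i %/ 2 ^ (L - k) == g j %/ 2 ^ (L - k))%N]].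

Definition covariance (R : realFieldType) (n : nat) (M : 'M[R]_n) : Prop :=
  M^T = M /\ forall v : 'cV[R]_n, 0 <= (v^T *m M *m v) 0 0.

Definition W_invariant (R : realFieldType) (L : nat) (M : 'M[R]_(2 ^ L)) : Prop :=
  forall g, g \in W L -> perm_mx g *m M *m invmx (perm_mx g) = M.

Definition haar_scale (c : nat) : nat :=
  if c == 0%N then 0%N else (trunc_log 2 c).+1.

(* Haar wavelet entry at leaf j, column c (columns ordered by scale:
   c = 0 is phi, c = 2^(s-1) + p is psi_{s,p}). *)
Definition haar_entry (R : rcfType) (L j c : nat) : R :=
  if c == 0%N then (Num.sqrt (2 ^+ L))^-1
  else
    let s := haar_scale c in
    let p := (c - 2 ^ (s - 1))%N in
    let h := (2 ^ (L - s))%N in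
    let a := (p * 2 ^ (L - s + 1))%N in
    let v := (Num.sqrt (2 ^+ (L + 1 - s)))^-1 in   (* = 2^((s-L-1)/2) *)
    if (a <= j < a + h)%N then v
    else if (a + h <= j < a + 2 * h)%N then - v
    else 0.

Definition haar_mx (R : rcfType) (L : nat) : 'M[R]_(2 ^ L) :=
  \matrix_(j, c) haar_entry R L j c.

(* The Haar columns diagonalize an invariant covariance because W_L contains
   enough symmetries of them.  For a wavelet psi, the automorphism swapping the
   two halves of its support negates psi and fixes every column of coarser or
   equal scale; as the form u^T M v is invariant under W_L, psi^T M phi equals
   its own opposite, hence vanishes.  Two wavelets of the same scale are
   exchanged by xoring the leaf index with a suitable constant, again an element
   of W_L, so they have the same Rayleigh quotient.  Orthonormality is the case
   M = 1 together with the computation of the column norms. *)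

From Stdlib Require Import PeanoNat.
From HB Require Import structures.
From mathcomp Require Import all_boot all_order all_algebra all_fingroup.
From mathcomp Require Import zify.

Import GRing.Theory Num.Theory.

Lemma expn_natpow m n : m ^ n = Nat.pow m n.
Proof. by elim: n => // n IHn; rewrite expnS IHn. Qed.

Lemma divn_natdiv m d : 0 < d -> m %/ d = Nat.div m d.
Proof.
move=> d_gt0; apply: (Nat.div_unique _ _ _ (m %% d)).
  by apply/ltP; rewrite ltn_mod.
by rewrite {1}(divn_eq m d) -plusE -multE; lia.
Qed.

Lemma lxorK m : involutive (Nat.lxor ^~ m).
Proof. by move=> x; rewrite Nat.lxor_assoc Nat.lxor_nilpotent Nat.lxor_0_r. Qed.

Lemma lxor_divn_pow2 x y a :
  Nat.lxor x y %/ 2 ^ a = Nat.lxor (x %/ 2 ^ a) (y %/ 2 ^ a).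
Proof.
rewrite !divn_natdiv ?expn_gt0 // expn_natpow -!Nat.shiftr_div_pow2.
exact: Nat.shiftr_lxor.
Qed.

Lemma ltn_pow2_divn x k : (x < 2 ^ k) = (x %/ 2 ^ k == 0).
Proof. by rewrite -{1}[2 ^ k]mul1n -ltn_divLR ?expn_gt0 // ltnS leqn0. Qed.

Lemma eq_divn_range d j k : 0 < d -> (j %/ d == k) = (k * d <= j < k.+1 * d).
Proof.
move=> d_gt0; rewrite eqn_leq andbC -[j %/ d <= k]ltnS.
by rewrite ltn_divLR // leq_divRL.
Qed.

Lemma lxor_ltn_pow2 x y k : x < 2 ^ k -> y < 2 ^ k -> Nat.lxor x y < 2 ^ k.
Proof. by rewrite !ltn_pow2_divn lxor_divn_pow2 => /eqP-> /eqP->. Qed.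

Lemma lxor_double x y : Nat.lxor (2 * x) (2 * y) = 2 * Nat.lxor x y.
Proof.
rewrite -!multE; apply: Nat.bits_inj => -[|n].
  by rewrite Nat.lxor_spec !Nat.testbit_even_0.
by rewrite Nat.lxor_spec !Nat.testbit_even_succ ?Nat.lxor_spec //; lia.
Qed.

Lemma lxor_double1 x y : Nat.lxor (2 * x + 1) (2 * y) = 2 * Nat.lxor x y + 1.
Proof.
rewrite -!multE -!plusE; apply: Nat.bits_inj => -[|n].
  by rewrite Nat.lxor_spec Nat.testbit_even_0 !Nat.testbit_odd_0.
rewrite Nat.lxor_spec !Nat.testbit_odd_succ ?Nat.testbit_even_succ ?Nat.lxor_spec //; lia.
Qed.

Lemma lxor_even1 p : Nat.lxor (2 * p) 1 = 2 * p + 1.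
Proof. by rewrite Nat.lxor_comm -[1]/(2 * 0 + 1) lxor_double1 Nat.lxor_0_l. Qed.

Lemma divn2_lxor1 x : Nat.lxor x 1 %/ 2 = x %/ 2.
Proof. by rewrite -(expn1 2) lxor_divn_pow2 [1 %/ _]divn_small ?Nat.lxor_0_r. Qed.

(* Xoring with [m < 2 ^ K] swaps the two halves of every dyadic sub-block of
   size [2 ^ (a + 1)] for each bit [a] of [m]; doing so inside the block [b] of
   size [2 ^ K] only is therefore a tree automorphism. *)
Definition block_xor (K b m x : nat) : nat :=
  if x %/ 2 ^ K == b then Nat.lxor x m else x.

Lemma block_xor_divn_le K b m x a : a <= K ->
  block_xor K b m x %/ 2 ^ a = block_xor (K - a) b (m %/ 2 ^ a) (x %/ 2 ^ a).
Proof.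
move=> aK; rewrite /block_xor -divnMA -expnD subnKC //.
by case: ifP; rewrite ?lxor_divn_pow2.
Qed.

Lemma block_xor_divn_ge K b m x a : K <= a -> m < 2 ^ K ->
  block_xor K b m x %/ 2 ^ a = x %/ 2 ^ a.
Proof.
move=> Ka mK; rewrite /block_xor; case: ifP => // _.
rewrite lxor_divn_pow2 (divn_small (leq_trans mK _)) ?leq_pexp2l //.
exact: Nat.lxor_0_r.
Qed.

Lemma block_xorK K b m : m < 2 ^ K -> involutive (block_xor K b m).
Proof.
move=> mK x; rewrite {1}/block_xor.
have := block_xor_divn_ge K b m x K (leqnn K) mK.
by rewrite /block_xor; case: ifP => [/eqP-> <-|->]; rewrite ?eqxx ?lxorK.
Qed.

Lemma block_xor_top K m x : x < 2 ^ K -> block_xor K 0 m x = Nat.lxor x m.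
Proof. by rewrite ltn_pow2_divn /block_xor => ->. Qed.

Section BlockXorPerm.
Variables (L K b m : nat).
Hypotheses (KL : K <= L) (mK : m < 2 ^ K).

Lemma block_xor_ltn {x} : x < 2 ^ L -> block_xor K b m x < 2 ^ L.
Proof. by rewrite !ltn_pow2_divn block_xor_divn_ge. Qed.

Definition block_xor_ord (i : 'I_(2 ^ L)) : 'I_(2 ^ L) :=
  Ordinal (block_xor_ltn (ltn_ord i)).

Lemma block_xor_ordK : involutive block_xor_ord.
Proof. by move=> i; apply: val_inj; apply: block_xorK. Qed.

Definition block_xor_perm : {perm 'I_(2 ^ L)} := perm (inv_inj block_xor_ordK).

Lemma block_xor_permE i : val (block_xor_perm i) = block_xor K b m i.
Proof. by rewrite permE. Qed.

Lemma block_xor_perm_in_W : block_xor_perm \in W L.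
Proof.
rewrite inE; apply/forallP => k; apply/forallP => i; apply/forallP => j.
rewrite !block_xor_permE; set a := L - k.
have [aK|Ka] := leqP a K; last by rewrite !block_xor_divn_ge // ltnW.
have mKa : m %/ 2 ^ a < 2 ^ (K - a) by rewrite ltn_divLR ?expn_gt0 // -expnD subnK.
by rewrite !block_xor_divn_le // (inv_eq (block_xorK _ b _ mKa)) block_xorK.
Qed.

End BlockXorPerm.

Local Open Scope ring_scope.

Lemma sum_divn {V : nmodType} (F : nat -> V) {N n d} : N = (n * d)%N ->
  \sum_(j < N) F (j %/ d)%N = (\sum_(k < n) F k) *+ d.
Proof.
move->.
have [->|d_gt0] := posnP d; first by rewrite muln0 big_ord0 mulr0n.
elim: n => [|n IHn]; first by rewrite !big_ord0 mul0rn.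
rewrite mulSnr big_split_ord /= IHn big_ord_recr /= mulrnDl.
congr (_ + _); rewrite -[in RHS](card_ord d) -sumr_const.
by apply: eq_bigr => i _; rewrite divnMDl // divn_small ?addn0.
Qed.

Lemma sqr_inv_sqrt_mulrn (R : rcfType) n : (0 < n)%N ->
  (Num.sqrt n%:R : R)^-1 ^+ 2 *+ n = 1.
Proof.
move=> n_gt0; rewrite exprVn sqr_sqrtr ?ler0n // -mulr_natr mulVf //.
by rewrite pnatr_eq0 -lt0n.
Qed.

Lemma perm_mx_mul_col (R : pzSemiRingType) m n (g : {perm 'I_m}) (A : 'M[R]_(m, n)) k :
  perm_mx g *m col k A = \col_i A (g i) k.
Proof. by apply/colP => i; rewrite -row_permE !mxE. Qed.

Lemma mulmx_tr_entry (R : pzSemiRingType) m n (A B : 'M[R]_(m, n)) (M : 'M[R]_m) i j :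
  (A^T *m M *m B) i j = ((col i A)^T *m M *m col j B) 0 0.
Proof.
rewrite !mxE; apply: eq_bigr => k _; rewrite !mxE; congr (_ * _).
by apply: eq_bigr => l _; rewrite !mxE.
Qed.

Section InvariantForm.
Context {R : numDomainType} {n : nat} {M : 'M[R]_n} {g : {perm 'I_n}}.
Hypothesis Mg : perm_mx g *m M *m invmx (perm_mx g) = M.

Lemma form_perm_mx (u v : 'cV[R]_n) :
  (perm_mx g *m u)^T *m M *m (perm_mx g *m v) = u^T *m M *m v.
Proof.
have MgC : M *m perm_mx g = perm_mx g *m M.
  by rewrite -{1}Mg -!mulmxA mulVmx ?mulmx1 ?unitmx_perm.
rewrite trmx_mul tr_perm_mx -!mulmxA (mulmxA M) MgC -mulmxA.
by rewrite (mulmxA (perm_mx g^-1)) -perm_mxM mulVg perm_mx1 mul1mx !mulmxA.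
Qed.

Lemma form_eq0_perm_mx_opp {u v : 'cV[R]_n} :
  perm_mx g *m u = - u -> perm_mx g *m v = v -> (u^T *m M *m v) 0 0 = 0.
Proof.
move=> gu gv; have := form_perm_mx u v.
rewrite gu gv linearN /= !mulNmx => /(congr1 (fun A : 'M_1 => A 0 0)).
by rewrite mxE => /eqP; rewrite eqNr => /eqP.
Qed.

End InvariantForm.

Section Wavelet.
Variable V : zmodType.

Definition wavelet (p : nat) (v : V) (X : nat) : V :=
  if X == (2 * p)%N then v else if X == (2 * p + 1)%N then - v else 0.

Lemma wavelet_even p v : wavelet p v (2 * p) = v.
Proof. by rewrite /wavelet eqxx. Qed.

Lemma wavelet_odd p v : wavelet p v (2 * p + 1) = - v.
Proof. by rewrite /wavelet eqxx ifN //; lia. Qed.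

Lemma wavelet_out p v X : (X %/ 2 != p)%N -> wavelet p v X = 0.
Proof. by move=> hX; rewrite /wavelet ifN; [rewrite ifN //|]; lia. Qed.

Lemma wavelet_flip p v X : wavelet p v (block_xor 1 p 1 X) = - wavelet p v X.
Proof.
rewrite /block_xor expn1; have [hX|hX] := eqVneq (X %/ 2)%N p; last first.
  by rewrite wavelet_out ?oppr0.
have [->|->] : X = (2 * p)%N \/ X = (2 * p + 1)%N by lia.
  by rewrite lxor_even1 wavelet_odd wavelet_even.
by rewrite -{1}lxor_even1 lxorK wavelet_odd wavelet_even opprK.
Qed.

Lemma wavelet_flip_other p q v X : p != q ->
  wavelet q v (block_xor 1 p 1 X) = wavelet q v X.
Proof.
move=> pq; rewrite /block_xor expn1; case: eqP => [hX|//].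
by rewrite !wavelet_out ?divn2_lxor1 ?hX.
Qed.

Lemma wavelet_lxor p q v X :
  wavelet q v (Nat.lxor X (2 * Nat.lxor p q)) = wavelet p v X.
Proof.
have Eq : Nat.lxor q (Nat.lxor p q) = p.
  by rewrite Nat.lxor_comm Nat.lxor_assoc Nat.lxor_nilpotent Nat.lxor_0_r.
by rewrite /wavelet !(inv_eq (lxorK _)) lxor_double lxor_double1 Eq.
Qed.

End Wavelet.

Arguments wavelet {V}.

Lemma wavelet_sqr (R : pzRingType) p (v : R) X :
  wavelet p v X ^+ 2 = if (X %/ 2 == p)%N then v ^+ 2 else 0.
Proof.
have [hX|hX] := eqVneq (X %/ 2)%N p; last by rewrite wavelet_out ?expr0n.
have [->|->] : X = (2 * p)%N \/ X = (2 * p + 1)%N by lia.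
  by rewrite wavelet_even.
by rewrite wavelet_odd sqrrN.
Qed.

(* Column [c > 0] is psi_{s,p} with [s = haar_scale c], [p = haar_transl c],
   and half-width [h = 2 ^ haar_level L c]. *)
Definition haar_transl (c : nat) : nat := c - 2 ^ (haar_scale c - 1).
Definition haar_level (L c : nat) : nat := L - haar_scale c.

Lemma haar_scale_gt0 {c} : (0 < c)%N -> (0 < haar_scale c)%N.
Proof. by move=> c_gt0; rewrite /haar_scale gtn_eqF. Qed.

Lemma haar_scale_bounds {c} : (0 < c)%N ->
  (2 ^ (haar_scale c - 1) <= c < 2 ^ haar_scale c)%N.
Proof. by move=> c_gt0; rewrite /haar_scale gtn_eqF // subn1; apply: trunc_log_bounds. Qed.

Lemma haar_scale_leq {L c} : (c < 2 ^ L)%N -> (haar_scale c <= L)%N.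
Proof.
have [->//|c_gt0 cL] := posnP c.
have [lo _] := andP (haar_scale_bounds c_gt0).
by have := leq_ltn_trans lo cL; rewrite ltn_exp2l //; lia.
Qed.

Lemma haar_entry_wavelet (R : rcfType) L j c : (0 < c)%N -> (c < 2 ^ L)%N ->
  haar_entry R L j c = wavelet (haar_transl c)
    (Num.sqrt (2 ^+ (haar_level L c).+1))^-1 (j %/ 2 ^ haar_level L c)%N.
Proof.
move=> c_gt0 cL; have sL := haar_scale_leq cL; have s_gt0 := haar_scale_gt0 c_gt0.
rewrite /haar_entry gtn_eqF // /wavelet /haar_transl /haar_level.
set s := haar_scale c in sL s_gt0 *; set e := (L - s)%N; set p := (c - _)%N.
have -> : (L + 1 - s = e.+1)%N by lia.
have -> : (p * 2 ^ (e + 1) = 2 * p * 2 ^ e)%N by rewrite addn1 expnS mulnCA mulnA.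
rewrite [(2 * 2 ^ e)%N]mul2n -addnn addnA -!mulSnr -!eq_divn_range ?expn_gt0 //.
by rewrite addn1.
Qed.

Lemma haar_scale_eq0 c : (haar_scale c == 0)%N = (c == 0)%N.
Proof. by rewrite /haar_scale; case: (c == 0)%N. Qed.

Lemma haar_transl_ltn {c} : (0 < c)%N -> (haar_transl c < 2 ^ (haar_scale c - 1))%N.
Proof.
move=> c_gt0; have [lo hi] := andP (haar_scale_bounds c_gt0).
have := haar_scale_gt0 c_gt0; rewrite /haar_transl.
by case: (haar_scale c) lo hi => // s; rewrite expnS subn1 /=; lia.
Qed.

Section HaarColumns.
Context (R : rcfType) {L : nat}.
Local Notation H := (haar_mx R L).

Lemma haar_col_flip {c : 'I_(2 ^ L)} : (0 < c)%N ->
  exists2 g, g \in W L &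
    perm_mx g *m col c H = - col c H /\
    forall d : 'I_(2 ^ L), d != c -> (haar_scale d <= haar_scale c)%N ->
      perm_mx g *m col d H = col d H.
Proof.
move=> c_gt0; have sL := haar_scale_leq (ltn_ord c); have s_gt0 := haar_scale_gt0 c_gt0.
set e := haar_level L c; set p := haar_transl c.
have KL : (e + 1 <= L)%N by rewrite /e /haar_level; lia.
have mK : (2 ^ e < 2 ^ (e + 1))%N by rewrite ltn_exp2l // addn1.
exists (block_xor_perm L (e + 1) p (2 ^ e) KL mK); first exact: block_xor_perm_in_W.
have halfE j : (block_xor (e + 1) p (2 ^ e) j %/ 2 ^ e = block_xor 1 p 1 (j %/ 2 ^ e))%N.
  by rewrite block_xor_divn_le ?leq_addr // addKn divnn expn_gt0.
split.
  apply/colP => j; rewrite perm_mx_mul_col !mxE block_xor_permE.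
  by rewrite !haar_entry_wavelet // halfE wavelet_flip.
move=> d dc sdc; apply/colP => j; rewrite perm_mx_mul_col !mxE block_xor_permE.
have [-> //|d_gt0] := posnP d.
rewrite !haar_entry_wavelet //; have [lo hi] := andP (haar_scale_bounds c_gt0).
have [sdc'|] := eqVneq (haar_scale d) (haar_scale c); last first.
  rewrite neq_ltn [(haar_scale c < _)%N]ltnNge sdc orbF => sdc'.
  by rewrite block_xor_divn_ge // /e /haar_level; lia.
have [lo' hi'] := andP (haar_scale_bounds d_gt0).
have pd : p != haar_transl d.
  apply: contra dc => /eqP; rewrite /p /haar_transl sdc' => pE.
  by apply/eqP/ord_inj; rewrite sdc' in lo'; lia.
by rewrite /haar_level sdc' -/(haar_level L c) halfE wavelet_flip_other.
Qed.

Lemma haar_col_shift {c d : 'I_(2 ^ L)} : (0 < c)%N -> haar_scale c = haar_scale d ->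
  exists2 g, g \in W L & perm_mx g *m col d H = col c H.
Proof.
move=> c_gt0 scd; have s_gt0 := haar_scale_gt0 c_gt0.
have d_gt0 : (0 < d)%N by rewrite lt0n -haar_scale_eq0 -scd -lt0n.
have sL := haar_scale_leq (ltn_ord c).
have ecd : haar_level L d = haar_level L c by rewrite /haar_level scd.
set e := haar_level L c in ecd *; set q := Nat.lxor (haar_transl c) (haar_transl d).
have qs : (q < 2 ^ (haar_scale c - 1))%N.
  by apply: lxor_ltn_pow2; [|rewrite scd]; apply: haar_transl_ltn.
have mL : (q * 2 ^ (e + 1) < 2 ^ L)%N.
  have -> : L = (haar_scale c - 1 + (e + 1))%N by rewrite /e /haar_level; lia.
  by rewrite [(2 ^ (haar_scale c - 1 + _))%N]expnD ltn_pmul2r ?expn_gt0.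
exists (block_xor_perm L L 0 _ (leqnn L) mL); first exact: block_xor_perm_in_W.
apply/colP => j; rewrite perm_mx_mul_col !mxE block_xor_permE block_xor_top //.
rewrite !haar_entry_wavelet // ecd lxor_divn_pow2.
by rewrite addn1 expnS mulnA [(q * 2)%N]mulnC mulnK ?expn_gt0 // wavelet_lxor.
Qed.

Lemma haar_col_norm (c : 'I_(2 ^ L)) : \sum_j H j c ^+ 2 = 1.
Proof.
have [c0|c_gt0] := posnP c.
  rewrite (eq_bigr (fun=> (Num.sqrt (2 ^+ L))^-1 ^+ 2)) => [|j _]; last by rewrite mxE c0.
  by rewrite sumr_const card_ord -natrX sqr_inv_sqrt_mulrn ?expn_gt0.
have sL := haar_scale_leq (ltn_ord c); have s_gt0 := haar_scale_gt0 c_gt0.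
set e := haar_level L c; set p := haar_transl c.
set v := (Num.sqrt (2 ^+ e.+1) : R)^-1.
under eq_bigr do rewrite mxE haar_entry_wavelet // wavelet_sqr -divnMA -expnSr.
have split2L : (2 ^ L = 2 ^ (haar_scale c - 1) * 2 ^ e.+1)%N.
  by rewrite -expnD /e /haar_level; f_equal; lia.
rewrite (sum_divn (fun Y => if Y == p then v ^+ 2 else 0) split2L) -big_mkcond /=.
rewrite (big_pred1 (Ordinal (haar_transl_ltn c_gt0))) => [|Y] //.
by rewrite /v -natrX sqr_inv_sqrt_mulrn ?expn_gt0.
Qed.

End HaarColumns.

Lemma W_invariant1 (R : realFieldType) L : W_invariant (1%:M : 'M[R]_(2 ^ L)).
Proof. by move=> g _; rewrite mulmx1 mulmxV ?unitmx_perm. Qed.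

Section HaarDiagonalizes.
Variables (R : rcfType) (L : nat) (M : 'M[R]_(2 ^ L)).
Hypothesis MW : W_invariant M.
Local Notation H := (haar_mx R L).
Local Notation D := (H^T *m M *m H).

Lemma haar_conj_offdiag_eq0 : M^T = M -> forall c d : 'I_(2 ^ L), c != d -> D c d = 0.
Proof.
move=> MT.
have DT : D^T = D by rewrite !trmx_mul trmxK MT mulmxA.
have D_sym c d : D c d = D d c by rewrite -{1}DT mxE.
suff flip_finer (c d : 'I_(2 ^ L)) : c != d -> (haar_scale d <= haar_scale c)%N -> D c d = 0.
  move=> c d cd; have [sdc|/ltnW scd] := leqP (haar_scale d) (haar_scale c).
    exact: flip_finer.
  by rewrite D_sym flip_finer // eq_sym.
move=> cd sdc; have [c0|c_gt0] := posnP c.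
  move: sdc; rewrite c0 leqn0 haar_scale_eq0 => /eqP d0.
  by case/eqP: cd; apply: ord_inj; rewrite c0 d0.
have [g gW [gc gd]] := haar_col_flip R c_gt0.
rewrite mulmx_tr_entry (form_eq0_perm_mx_opp (MW g gW) gc) //.
by apply: gd; rewrite // eq_sym.
Qed.

Lemma haar_conj_diag_scale (c d : 'I_(2 ^ L)) : haar_scale c = haar_scale d -> D c c = D d d.
Proof.
move=> scd; have [c0|c_gt0] := posnP c.
  suff -> : c = d by [].
  by apply: ord_inj; apply/eqP; rewrite c0 eq_sym -haar_scale_eq0 -scd c0.
have [g gW gdc] := haar_col_shift R c_gt0 scd.
by rewrite [LHS]mulmx_tr_entry [RHS]mulmx_tr_entry -gdc (form_perm_mx (MW g gW)).
Qed.

End HaarDiagonalizes.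

Theorem mainTheorem11 (R : rcfType) (L : nat) (hL : (0 < L)%N) :
  (* the Haar matrix is orthogonal (a real unitary) *)
  (haar_mx R L)^T *m haar_mx R L = 1%:M /\
  (* and it is the matched unitary: it diagonalizes every W_L-invariant
     covariance, with eigenvalue constant on each scale subspace *)
  (forall M : 'M[R]_(2 ^ L), covariance M -> W_invariant M ->
     let D := (haar_mx R L)^T *m M *m haar_mx R L in
     (forall i j : 'I_(2 ^ L), i != j -> D i j = 0) /\
     (forall i j : 'I_(2 ^ L), haar_scale i = haar_scale j -> D i i = D j j)).
Proof.
split; last first.
  move=> M [MT _] MW D; split; [exact: haar_conj_offdiag_eq0 | exact: haar_conj_diag_scale].
apply/matrixP => c d; have [<-|cd] := eqVneq c d.
  rewrite !mxE eqxx -(haar_col_norm R c); apply: eq_bigr => j _.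
  by rewrite !mxE expr2.
rewrite [RHS]mxE (negPf cd) -(mulmx1 (haar_mx R L)^T).
by rewrite haar_conj_offdiag_eq0 ?trmx1 //; apply: W_invariant1.
Qed.
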